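(* Let $\Gamma$ be a distance-regular graph with valency $k\geq 3$, diameter $D\geq 3$, intersection numbers $a_i,b_i,c_i$, and distinct eigenvalues $k=\theta_0>\theta_1>\cdots>\theta_D$. Then: (i) $\theta_D < \frac{a_1-\sqrt{a_1^2+4k}}{2}$; (ii) $\theta_1 \geq \min\left\{\frac{a_1+\sqrt{a_1^2+4k}}{2},\, a_3\right\}$; (iii) if $D\geq 4$, then $\theta_1\geq \frac{a_1+\sqrt{a_1^2+4k}}{2}$.
   Context: All graphs are finite, simple, undirected and connected. For vertices $x,y$, $d(x,y)$ is the graph distance, $D=\max d(x,y)$ is the diameter, and $\Gamma_i(x)$ is the set of vertices at distance exactly $i$ from $x$. $\Gamma$ is distance-regular if there are integers $b_i,c_i$ such that for all $x,y$ with $d(x,y)=i$, $y$ has exactly $c_i$ neighbours in $\Gamma_{i-1}(x)$ and exactly $b_i$ neighbours in $\Gamma_{i+1}(x)$; then $\Gamma$ is regular of valency $k=b_0$, and $a_i:=k-b_i-c_i$ (the number of neighbours of $y$ in $\Gamma_i(x)$). The eigenvalues of $\Gamma$ are those of its adjacency matrix; a distance-regular graph of diameter $D$ has exactly $D+1$ distinct eigenvalues. *)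

From HB Require Import structures.
From mathcomp Require Import all_boot all_order all_algebra.
Set Implicit Arguments. Unset Strict Implicit. Unset Printing Implicit Defensive.
Import Order.TTheory GRing.Theory Num.Theory.

Section Graphs.
Variable T : finType.
Variable e : rel T.

Fixpoint reach (n : nat) (x y : T) : bool :=
  match n with
  | 0 => x == y
  | n'.+1 => reach n' x y || [exists z, reach n' x z && e z y]
  end.

(* graph distance d(x,y) = least n with a walk of length <= n
   (for connected graphs, d(x,y) < #|T|) *)
Definition gdist (x y : T) : nat := find (fun n => reach n x y) (iota 0 #|T|).

Definition diameter : nat := \max_(x : T) \max_(y : T) gdist x y.

Definition simple_connected_graph : Prop :=
  symmetric e /\ irreflexive e /\ (forall x y : T, connect e x y).

Definition distance_regular (b c : nat -> nat) : Prop :=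
  forall x y : T,
    #|[set z | e y z && ((gdist x z).+1 == gdist x y)]| = c (gdist x y) /\
    #|[set z | e y z && (gdist x z == (gdist x y).+1)]| = b (gdist x y).

Definition adjmx (R : nzRingType) : 'M[R]_#|T| :=
  \matrix_(i, j) ((e (enum_val i) (enum_val j))%:R)%R.

End Graphs.

(* valency k = b_0 and a_i = k - b_i - c_i *)
Definition inter_a (b c : nat -> nat) (i : nat) : nat := b 0 - b i - c i.

From HB Require Import structures.
From mathcomp Require Import all_boot all_order all_algebra.
From mathcomp Require Import complex.
From mathcomp Require Import zify ring lra.
Set Implicit Arguments. Unset Strict Implicit. Unset Printing Implicit Defensive.
Import Order.TTheory GRing.Theory Num.Theory.

(* For [r] a root of [X^2 - a1 X - k], the
   vector [f = (k / r) e_x + (sum of e_y, y ~ x)] satisfies [f^T A f = r f^T f],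
   because every neighbour of [x] has exactly [a1] neighbours adjacent to [x].
   (i) For the negative root, perturbing [f] at a vertex at distance 2 from [x]
   pushes its Rayleigh quotient below [r], so the least eigenvalue is [< r].
   For the positive root, the vectors of two vertices at distance >= 4 (iii),
   and [f] together with the indicator of [Gamma_3(x)], whose quotient is [a3]
   (ii), have non-adjacent supports.  A combination of two such vectors with
   zero sum is orthogonal to the constant Perron eigenvector, so its Rayleigh
   quotient, at least the smaller of the two quotients, is at most [theta_1]. *)

Section Distance.
Variables (T : finType) (e : rel T).
Hypothesis sym_e : symmetric e.
Hypothesis irr_e : irreflexive e.
Hypothesis conn_e : forall x y : T, connect e x y.

Lemma reachS n x y :
  reach e n.+1 x y = reach e n x y || [exists z, reach e n x z && e z y].
Proof. by []. Qed.

Lemma reach_mono n m x y : n <= m -> reach e n x y -> reach e m x y.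
Proof. by move=> /subnK <-; elim: (m - n) => // p IH /IH; rewrite addSn reachS => ->. Qed.

Lemma reach_rcons n x y z : reach e n x y -> e y z -> reach e n.+1 x z.
Proof. by move=> rxy eyz; rewrite reachS; apply/orP; right; apply/existsP; exists y; rewrite rxy. Qed.

Lemma reach_cons n x y w : e x y -> reach e n y w -> reach e n.+1 x w.
Proof.
move=> exy; elim: n w => [|n IH] w.
  by move=> /eqP <-; rewrite reachS; apply/orP; right; apply/existsP; exists x; rewrite /= eqxx.
rewrite reachS => /orP[/IH ryw|/existsP[z /andP[/IH rxz ezw]]]; first by rewrite reachS ryw.
by rewrite reachS; apply/orP; right; apply/existsP; exists z; rewrite rxz.
Qed.

Lemma reach_path p x : path e x p -> reach e (size p) x (last x p).
Proof. by elim: p x => [|y p IH] x //= /andP[exy /IH]; apply: reach_cons. Qed.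

Lemma reach_card x y : reach e #|T|.-1 x y.
Proof.
have /connectP [p pth ->] := conn_e x y.
case/shortenP: pth => p' pth' uniq_p' _.
apply: reach_mono (reach_path pth').
by have := max_card (mem (x :: p')); rewrite (card_uniqP uniq_p') /=; lia.
Qed.

Lemma gdist_leE x y m : (gdist e x y <= m) = reach e m x y.
Proof.
have T0 : 0 < #|T| by apply/card_gt0P; exists x.
have has_reach : has (fun n => reach e n x y) (iota 0 #|T|).
  by apply/hasP; exists #|T|.-1; rewrite ?mem_iota ?reach_card //; lia.
have lt_card : gdist e x y < #|T|.
  by rewrite -[X in _ < X](size_iota 0) -has_find.
have reach_gdist : reach e (gdist e x y) x y.
  by have := nth_find 0 has_reach; rewrite nth_iota.
apply/idP/idP => [le_m|]; first exact: reach_mono reach_gdist.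
rewrite leqNgt; apply: contraL => lt_m.
by have := before_find 0 lt_m; rewrite nth_iota ?add0n // => [->|]; last lia.
Qed.

Lemma gdist_xx x : gdist e x x = 0.
Proof. by apply/eqP; rewrite -leqn0 gdist_leE /=. Qed.

Lemma gdist_eq0 x y : (gdist e x y == 0) = (x == y).
Proof. by rewrite -leqn0 gdist_leE. Qed.

Lemma gdist_edge x y z : e y z -> gdist e x z <= (gdist e x y).+1.
Proof. by move=> eyz; rewrite gdist_leE; apply: reach_rcons eyz; rewrite -gdist_leE. Qed.

Lemma gdist_edge_sym x y z : e y z -> gdist e x y <= (gdist e x z).+1.
Proof. by rewrite sym_e; apply: gdist_edge. Qed.

Lemma gdist_eq1 x y : (gdist e x y == 1) = e x y.
Proof.
apply/idP/idP => [/eqP d1|exy].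
  have : gdist e x y <= 1 by rewrite d1.
  rewrite gdist_leE /= => /orP[/eqP xy|/existsP[z /andP[/eqP <- //]]].
  by move: d1; rewrite xy gdist_xx.
have := gdist_edge x exy; rewrite gdist_xx eqn_leq => -> /=.
rewrite lt0n gdist_eq0; apply: contraTneq exy => ->; by rewrite irr_e.
Qed.

Lemma gdist_le1_triangle x y v : gdist e y v <= 1 -> gdist e x y <= (gdist e x v).+1.
Proof.
rewrite leq_eqVlt ltnS leqn0 gdist_eq0 gdist_eq1 => /orP[eyv|/eqP <-].
  exact: gdist_edge_sym.
exact: leqnSn.
Qed.

Lemma gdist_pred x y i : gdist e x y = i.+1 -> exists2 z, e z y & gdist e x z = i.
Proof.
move=> dxy; have : reach e i.+1 x y by rewrite -gdist_leE dxy.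
rewrite reachS => /orP[|/existsP[z /andP[rxz ezy]]].
  by rewrite -gdist_leE dxy ltnn.
exists z => //; apply/eqP; rewrite eqn_leq gdist_leE rxz /=.
by have := gdist_edge x ezy; rewrite dxy.
Qed.

Lemma gdist_intermediate x y j : j <= gdist e x y -> exists z, gdist e x z = j.
Proof.
move=> /subnK; move: (gdist e x y - j) => m; elim: m y => [|m IH] y dxy.
  by exists y.
by have [z _ /esym /IH] := gdist_pred (esym dxy : gdist e x y = (m + j).+1).
Qed.

Lemma diameter_attained : (0 < diameter e)%N -> exists x y, gdist e x y = diameter e.
Proof.
case: (pickP (@predT T)) => [x0 _|T0]; last by rewrite /diameter big_pred0.
have T0 : 0 < #|T| by apply/card_gt0P; exists x0.
rewrite /diameter; have [x ->] := bigop.eq_bigmax (fun x => \max_y gdist e x y) T0.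
by have [y ->] := bigop.eq_bigmax (fun y => gdist e x y) T0; exists x, y.
Qed.

End Distance.

Local Open Scope ring_scope.

Lemma quadratic_roots (R : rcfType) (a k : R) : 0 < k ->
  let s := Num.sqrt (a ^+ 2 + 4 * k) in
  [/\ ((a - s) / 2) ^+ 2 = a * ((a - s) / 2) + k, (a - s) / 2 < 0,
      ((a + s) / 2) ^+ 2 = a * ((a + s) / 2) + k & 0 < (a + s) / 2].
Proof.
move=> k_gt0 s; have disc_ge0 : 0 <= a ^+ 2 + 4 * k by have := sqr_ge0 a; lra.
have sE : s ^+ 2 = a ^+ 2 + 4 * k by rewrite sqr_sqrtr.
have s_ge0 : 0 <= s by apply: sqrtr_ge0.
have a_lt_s : a < s by nra.
have a_gt_ms : - s < a by nra.
have kE : k = (s ^+ 2 - a ^+ 2) / 4 by rewrite sE; field.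
by split; [rewrite kE; field | lra | rewrite kE; field | lra].
Qed.

Section RealSymmetricSpectral.
Variable R : rcfType.
Local Notation C := (R[i]).
Local Notation toC := (real_complex R).

Lemma Re_sum I (r : seq I) (P : pred I) (F : I -> C) :
  complex.Re (\sum_(i <- r | P i) F i) = \sum_(i <- r | P i) complex.Re (F i).
Proof. by elim/big_rec2: _ => // i y1 y2 _ <-; case: (F i); case: y2. Qed.

Lemma Im_sum I (r : seq I) (P : pred I) (F : I -> C) :
  complex.Im (\sum_(i <- r | P i) F i) = \sum_(i <- r | P i) complex.Im (F i).
Proof. by elim/big_rec2: _ => // i y1 y2 _ <-; case: (F i); case: y2. Qed.

Lemma Re_mulr_real (x : C) (a : R) : complex.Re (x * toC a) = complex.Re x * a.
Proof. by case: x => u v /=; rewrite mulr0 subr0. Qed.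

Lemma Im_mulr_real (x : C) (a : R) : complex.Im (x * toC a) = complex.Im x * a.
Proof. by case: x => u v /=; rewrite mulr0 add0r. Qed.

Lemma Re_real_mulr (x : C) (a : R) : complex.Re (toC a * x) = a * complex.Re x.
Proof. by case: x => u v /=; rewrite mul0r subr0. Qed.

Lemma Im_real_mulr (x : C) (a : R) : complex.Im (toC a * x) = a * complex.Im x.
Proof. by case: x => u v /=; rewrite mul0r addr0. Qed.

Lemma mulr_conj (z : C) :
  z * Num.conj z = toC (complex.Re z ^+ 2 + complex.Im z ^+ 2).
Proof.
by case: z => a b; apply/eqP; rewrite eq_complex /=; apply/andP; split; apply/eqP; ring.
Qed.

Definition dotr n (u v : 'rV[R]_n) : R := (u *m v^T) 0 0.

(* Each complex unitary eigenvector of [A] contributes the eigenvectors given by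
   its real and imaginary parts. *)
Lemma symmx_spectral_decomposition n (A : 'M[R]_n) : A^T = A ->
  exists (d : 'I_n -> R) (X Y : 'I_n -> 'rV[R]_n),
  [/\ forall j, eigenvalue A (d j),
      forall j, X j *m A = d j *: X j,
      forall j, Y j *m A = d j *: Y j,
      forall u, dotr u u = \sum_j (dotr u (X j) ^+ 2 + dotr u (Y j) ^+ 2) &
      forall u, dotr (u *m A) u =
        \sum_j d j * (dotr u (X j) ^+ 2 + dotr u (Y j) ^+ 2)].
Proof.
move=> symA; pose AC : 'M[C]_n := map_mx toC A.
have ACreal : AC \is a realmx.
  by apply/mxOverP => i j; rewrite mxE; apply/complex_realP; eexists.
have ACsym : AC \is symmetricmx.
  by apply/is_hermitianmxP; rewrite expr0 scale1r map_mx_id // map_trmx symA.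
have ACherm := realsym_hermsym ACsym ACreal.
pose P := spectralmx AC; pose D := spectral_diag AC.
have Punit : P \is unitarymx by exact: spectral_unitarymx.
have Dreal : D \is a realmx by exact: hermitian_spectral_diag_real ACherm.
have PPt : P *m (P ^t Num.conj)%sesqui = 1%:M by exact/unitarymxP.
have PtP : (P ^t Num.conj)%sesqui *m P = 1%:M by exact: mulmx1C.
have invP : invmx P = (P ^t Num.conj)%sesqui by exact: invmx_unitary.
have ACE : AC = invmx P *m diag_mx D *m P.
  by apply/orthomx_spectralP; exact: hermitian_normalmx ACherm.
have PAC j l : (P *m AC) j l = D 0 j * P j l.
  by rewrite ACE invP !mulmxA PPt mul1mx mul_diag_mx mxE.
have DE j : D 0 j = toC (complex.Re (D 0 j)).
  by rewrite RRe_real //; exact: (mxOverP Dreal).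
pose d j := complex.Re (D 0 j).
pose X j : 'rV[R]_n := \row_l complex.Re (P j l).
pose Y j : 'rV[R]_n := \row_l complex.Im (P j l).
have XA j : X j *m A = d j *: X j.
  apply/rowP => l; have := congr1 (@complex.Re R) (PAC j l).
  rewrite [in RHS]DE Re_real_mulr !mxE Re_sum => <-.
  by apply: eq_bigr => m _; rewrite !mxE Re_mulr_real.
have YA j : Y j *m A = d j *: Y j.
  apply/rowP => l; have := congr1 (@complex.Im R) (PAC j l).
  rewrite [in RHS]DE Im_real_mulr !mxE Im_sum => <-.
  by apply: eq_bigr => m _; rewrite !mxE Im_mulr_real.
have coords u : exists w : 'rV[C]_n,
   [/\ forall j, complex.Re (w 0 j) = dotr u (X j),
       forall j, complex.Im (w 0 j) = - dotr u (Y j),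
       toC (dotr u u) = \sum_j w 0 j * Num.conj (w 0 j) &
       toC (dotr (u *m A) u) = \sum_j w 0 j * D 0 j * Num.conj (w 0 j)].
  pose uC := map_mx toC u; pose w := uC *m (P ^t Num.conj)%sesqui.
  have wt : (w ^t Num.conj)%sesqui = P *m uC^T.
    apply/matrixP => i j; rewrite !mxE rmorph_sum; apply: eq_bigr => l _.
    rewrite !mxE rmorphM; case: (P i l) => a b; apply/eqP.
    by rewrite eq_complex /=; apply/andP; split; apply/eqP; ring.
  exists w; rewrite /dotr; split.
  - move=> j; rewrite !mxE Re_sum; apply: eq_bigr => l _.
    by rewrite !mxE Re_real_mulr; case: (P j l).
  - move=> j; rewrite !mxE Im_sum -sumrN; apply: eq_bigr => l _.
    by rewrite !mxE Im_real_mulr; case: (P j l) => a b /=; rewrite mulrN.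
  - have -> : toC ((u *m u^T) 0 0) = (w *m (w ^t Num.conj)%sesqui) 0 0.
      rewrite wt /w -mulmxA (mulmxA _ P) PtP mul1mx.
      by rewrite !mxE rmorph_sum; apply: eq_bigr => l _; rewrite !mxE rmorphM.
    by rewrite mxE; apply: eq_bigr => j _; congr (_ * _); rewrite !mxE.
  - have uACu : map_mx toC (u *m A *m u^T) = uC *m AC *m uC^T.
      by rewrite !map_mxM map_trmx.
    have := congr1 (fun M : 'M[C]_1 => M 0 0) uACu; rewrite mxE => ->.
    rewrite ACE invP !mulmxA -/w -[w *m _ *m _ *m _]mulmxA -wt.
    rewrite mxE; apply: eq_bigr => j _; rewrite mul_mx_diag !mxE.
    by congr (_ * _); rewrite !mxE.
exists d, X, Y; split => //.
- move=> j; case: (eqVneq (X j) 0) => [X0|]; last first.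
    by move=> Xn0; apply/eigenvalueP; exists (X j).
  case: (eqVneq (Y j) 0) => [Y0|]; last first.
    by move=> Yn0; apply/eigenvalueP; exists (Y j).
  have Pj0 l : P j l = 0.
    have /rowP/(_ l) := X0; have /rowP/(_ l) := Y0; rewrite !mxE.
    by case: (P j l) => a b /= -> ->.
  have := congr1 (fun M : 'M[C]_n => M j j) PPt.
  rewrite !mxE big1 ?eqxx => [/eqP|l _]; last by rewrite Pj0 mul0r.
  by rewrite eq_sym oner_eq0.
- move=> u; have [w [wRe wIm wN _]] := coords u.
  apply: complexI; rewrite wN rmorph_sum; apply: eq_bigr => j _.
  by rewrite mulr_conj wRe wIm sqrrN.
- move=> u; have [w [wRe wIm _ wA]] := coords u.
  apply: complexI; rewrite wA rmorph_sum; apply: eq_bigr => j _.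
  by rewrite mulrAC mulr_conj wRe wIm sqrrN [D 0 j]DE -rmorphM mulrC.
Qed.

Lemma symmx_rayleigh_ge n (A : 'M[R]_n) (t : R) (u : 'rV[R]_n) : A^T = A ->
  (forall l, eigenvalue A l -> t <= l) -> t * dotr u u <= dotr (u *m A) u.
Proof.
move=> /symmx_spectral_decomposition [d [X [Y [eigd _ _ -> ->]]]] tle.
rewrite mulr_sumr; apply: ler_sum => j _; apply: ler_wpM2r; last exact: tle.
by rewrite addr_ge0 ?sqr_ge0.
Qed.

Lemma symmx_rayleigh_le n (A : 'M[R]_n) (t : R) (u : 'rV[R]_n) : A^T = A ->
  (forall l Z, Z *m A = l *: Z -> t < l -> dotr u Z = 0) ->
  dotr (u *m A) u <= t * dotr u u.
Proof.
move=> /symmx_spectral_decomposition [d [X [Y [_ XA YA -> ->]]]] orth.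
rewrite mulr_sumr; apply: ler_sum => j _.
have [tltd|dlet] := ltP t (d j); last by rewrite ler_wpM2r // addr_ge0 ?sqr_ge0.
by rewrite (orth _ _ (XA j)) // (orth _ _ (YA j)) // expr0n addr0 !mulr0.
Qed.

End RealSymmetricSpectral.

Section QuadraticForms.
Variables (R : rcfType) (T : finType) (e : rel T).
Hypothesis sym_e : symmetric e.

Definition adjform (f g : T -> R) := \sum_u \sum_v (e u v)%:R * f u * g v.
Definition sqnorm (f : T -> R) := \sum_u f u ^+ 2.

Lemma adjform_rowE f g : adjform f g = \sum_u f u * \sum_v (e u v)%:R * g v.
Proof. by apply: eq_bigr => u _; rewrite mulr_sumr; apply: eq_bigr => v _; ring. Qed.

Lemma adjformC f g : adjform f g = adjform g f.
Proof.
rewrite /adjform exchange_big; apply: eq_bigr => u _; apply: eq_bigr => v _.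
by rewrite sym_e; ring.
Qed.

Lemma sum_mul_delta (F : T -> R) z : \sum_v F v * (v == z)%:R = F z.
Proof.
rewrite (bigD1 z) //= eqxx mulr1 big1 ?addr0 // => v /negbTE ->.
by rewrite mulr0.
Qed.

Lemma adjform_delta z f : adjform (fun v => (v == z)%:R) f = \sum_v (e z v)%:R * f v.
Proof.
rewrite adjform_rowE (bigD1 z) //= eqxx mul1r [X in _ + X]big1 ?addr0 //.
by move=> u /negbTE ->; rewrite mul0r.
Qed.

Lemma sqnorm_ge0 f : 0 <= sqnorm f.
Proof. by apply: sumr_ge0 => v _; apply: sqr_ge0. Qed.

Lemma sqnorm_delta z : sqnorm (fun v => (v == z)%:R) = 1.
Proof.
rewrite /sqnorm (bigD1 z) //= eqxx expr1n big1 ?addr0 // => v /negbTE ->.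
by rewrite expr0n.
Qed.

Lemma adjform_addZ f g (t : R) :
  adjform (fun v => f v + t * g v) (fun v => f v + t * g v)
  = adjform f f + t * (adjform f g + adjform g f) + t ^+ 2 * adjform g g.
Proof.
rewrite /adjform; transitivity (\sum_u \sum_v ((e u v)%:R * f u * f v
   + t * ((e u v)%:R * f u * g v + (e u v)%:R * g u * f v)
   + t ^+ 2 * ((e u v)%:R * g u * g v))).
  by apply: eq_bigr => u _; apply: eq_bigr => v _; ring.
rewrite -!big_split /= !mulr_sumr -!big_split /=; apply: eq_bigr => u _.
by rewrite -!big_split /= !mulr_sumr -!big_split.
Qed.

Lemma sqnorm_addZ f g (t : R) : sqnorm (fun v => f v + t * g v)
  = sqnorm f + 2 * t * (\sum_v f v * g v) + t ^+ 2 * sqnorm g.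
Proof. by rewrite /sqnorm !mulr_sumr -!big_split /=; apply: eq_bigr => v _; ring. Qed.

Lemma adjform_lincomb_separated f g (al be : R) :
  (forall u v, e u v -> f u * g v = 0) ->
  adjform (fun v => al * f v + be * g v) (fun v => al * f v + be * g v)
  = al ^+ 2 * adjform f f + be ^+ 2 * adjform g g.
Proof.
move=> sep; rewrite /adjform !mulr_sumr -big_split /=; apply: eq_bigr => u _.
rewrite !mulr_sumr -big_split /=; apply: eq_bigr => v _.
case euv: (e u v); last by rewrite !mul0r; ring.
have fg0 := sep u v euv; have gf0 : f v * g u = 0 by apply: sep; rewrite sym_e.
rewrite [(true : nat)%:R]/= mulr1n.
transitivity (al ^+ 2 * (f u * f v) + be ^+ 2 * (g u * g v)
  + al * be * (f u * g v) + al * be * (f v * g u)); first ring.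
by rewrite fg0 gf0 !mulr0 !addr0 !mul1r.
Qed.

Lemma sqnorm_lincomb_disjoint f g (al be : R) : (forall v, f v * g v = 0) ->
  sqnorm (fun v => al * f v + be * g v) = al ^+ 2 * sqnorm f + be ^+ 2 * sqnorm g.
Proof.
move=> disj; rewrite /sqnorm !mulr_sumr -big_split /=; apply: eq_bigr => v _.
transitivity (al ^+ 2 * f v ^+ 2 + be ^+ 2 * g v ^+ 2 + 2 * al * be * (f v * g v)).
  by ring.
by rewrite disj mulr0 addr0.
Qed.

Lemma rayleigh_separated_le (t mu : R) f g :
  (forall h, \sum_v h v = 0 -> adjform h h <= t * sqnorm h) ->
  (forall u v, e u v -> f u * g v = 0) -> (forall v, f v * g v = 0) ->
  0 < \sum_v f v -> 0 < \sum_v g v -> 0 < sqnorm f ->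
  mu * sqnorm f <= adjform f f -> mu * sqnorm g <= adjform g g -> mu <= t.
Proof.
move=> rayleigh sep disj sf_gt0 sg_gt0 nf_gt0 muf mug.
pose al := \sum_v g v; pose be := - \sum_v f v.
have sum0 : \sum_v (al * f v + be * g v) = 0.
  by rewrite big_split /= -!mulr_sumr /al /be; ring.
have := rayleigh _ sum0.
rewrite adjform_lincomb_separated // sqnorm_lincomb_disjoint //.
set N := al ^+ 2 * sqnorm f + be ^+ 2 * sqnorm g.
have N_gt0 : 0 < N.
  apply: ltr_wpDr; first by rewrite mulr_ge0 ?sqr_ge0 ?sqnorm_ge0.
  by rewrite mulr_gt0 ?exprn_gt0.
move=> le_t; rewrite -(ler_pM2r N_gt0); apply: le_trans le_t.
rewrite /N mulrDr; apply: lerD; rewrite mulrCA; apply: ler_wpM2l => //;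
  exact: sqr_ge0.
Qed.

Definition rowfun (f : T -> R) : 'rV[R]_#|T| := \row_i f (enum_val i).

Lemma sum_enum_val (F : T -> R) : \sum_(i < #|T|) F (enum_val i) = \sum_x F x.
Proof. by rewrite -(big_enum_val F). Qed.

Lemma dotr_rowfun f (X : 'rV[R]_#|T|) :
  dotr (rowfun f) X = \sum_x f x * X 0 (enum_rank x).
Proof.
rewrite /dotr mxE -sum_enum_val.
by apply: eq_bigr => i _; rewrite !mxE enum_valK.
Qed.

Lemma dotr_rowfunE f : dotr (rowfun f) (rowfun f) = sqnorm f.
Proof.
rewrite dotr_rowfun /sqnorm; apply: eq_bigr => x _.
by rewrite mxE enum_rankK expr2.
Qed.

Lemma dotr_rowfun_adjmx f : dotr (rowfun f *m adjmx e R) (rowfun f) = adjform f f.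
Proof.
rewrite /dotr mxE adjform_rowE -sum_enum_val; apply: eq_bigr => j _.
rewrite !mxE mulrC -sum_enum_val; congr (_ * _); apply: eq_bigr => i _.
by rewrite !mxE sym_e mulrC.
Qed.

Lemma adjmx_sym : (adjmx e R)^T = adjmx e R.
Proof. by apply/matrixP => i j; rewrite !mxE sym_e. Qed.

Lemma adjform_ge_eig_lb (t : R) f :
  (forall l, eigenvalue (adjmx e R) l -> t <= l) -> t * sqnorm f <= adjform f f.
Proof.
by move=> le_eig; rewrite -dotr_rowfunE -dotr_rowfun_adjmx;
  apply: symmx_rayleigh_ge adjmx_sym le_eig.
Qed.

End QuadraticForms.

Section RegularGraph.
Variables (R : rcfType) (T : finType) (e : rel T) (k : nat).
Hypothesis sym_e : symmetric e.
Hypothesis conn_e : forall x y : T, connect e x y.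
Hypothesis regular_e : forall x, #|[set y | e x y]| = k.

Lemma sum_adj x : \sum_y (e x y)%:R = k%:R :> R.
Proof.
rewrite -natr_sum -(regular_e x) -sum1_card; congr (_%:R).
by rewrite [RHS]big_mkcond; apply: eq_bigr => y _; rewrite inE; case: (e x y).
Qed.

Lemma adjmx_eigenvalue_deg : T -> eigenvalue (adjmx e R) k%:R.
Proof.
move=> x; apply/eigenvalueP; exists (rowfun (fun _ => 1 : R)).
  apply/rowP => j; rewrite !mxE mulr1 -(sum_adj (enum_val j)) -[RHS]sum_enum_val.
  by apply: eq_bigr => i _; rewrite !mxE mul1r sym_e.
apply/negP => /eqP/rowP/(_ (enum_rank x)); rewrite !mxE => /eqP.
by rewrite oner_eq0.
Qed.

(* At a positive maximum [x0], [l h x0] is a sum of [k] values [<= h x0] with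
   [l >= k]: all neighbours attain the maximum, which spreads by connectivity. *)
Lemma eigenfun_pos_max_const (h : T -> R) (l : R) x0 :
  (forall x, \sum_y (e x y)%:R * h y = l * h x) -> k%:R <= l ->
  (forall y, h y <= h x0) -> 0 < h x0 -> forall y, h y = h x0.
Proof.
move=> eig_h le_k_l hmax h_gt0.
have nbr_max y z : h y = h x0 -> e y z -> h z = h x0.
  move=> hy eyz; pose gap w := (e y w)%:R * (h x0 - h w).
  have gap_ge0 w : true -> 0 <= gap w.
    by move=> _; rewrite mulr_ge0 ?ler0n // subr_ge0.
  have gap_sum : \sum_w gap w = (k%:R - l) * h x0.
    rewrite (eq_bigr (fun w => (e y w)%:R * h x0 - (e y w)%:R * h w)); last first.
      by move=> w _; rewrite /gap mulrBr.
    by rewrite sumrB -mulr_suml sum_adj eig_h hy mulrBl.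
  have gap_sum0 : \sum_w gap w = 0.
    apply/eqP; rewrite eq_le sumr_ge0 // andbT gap_sum.
    by rewrite mulr_le0_ge0 ?subr_le0 // ltW.
  have := @psumr_eq0P _ _ _ _ gap_ge0 gap_sum0 z isT.
  by rewrite /gap eyz mul1r => /eqP; rewrite subr_eq0 => /eqP.
have closed_max : closed e [pred y | h y == h x0].
  move=> y z eyz; rewrite !inE; apply/idP/idP => /eqP hyz; apply/eqP.
    exact: nbr_max hyz eyz.
  by apply: nbr_max hyz _; rewrite sym_e.
move=> y; have := closed_connect closed_max (conn_e x0 y).
by rewrite !inE eqxx => /esym/eqP.
Qed.

Lemma eigenfun_const (h : T -> R) (l : R) :
  (forall x, \sum_y (e x y)%:R * h y = l * h x) -> k%:R <= l ->
  forall x y, h x = h y.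
Proof.
move=> eig_h le_k_l x y.
have maxP (g : T -> R) : exists x0, forall v, g v <= g x0.
  by have [x0 _ gmax] := @arg_maxP _ _ T x xpredT g isT; exists x0 => v; apply: gmax.
have [xmax hmax] := maxP h; have [xmin hmin] := maxP (fun v => - h v).
have [max_gt0|max_le0] := ltrP 0 (h xmax).
  by rewrite !(eigenfun_pos_max_const eig_h le_k_l hmax max_gt0).
have eig_opp v : \sum_w (e v w)%:R * - h w = l * - h v.
  by under eq_bigr => w _ do rewrite mulrN; rewrite sumrN eig_h mulrN.
have [min_lt0|min_ge0] := ltrP 0 (- h xmin).
  have := eigenfun_pos_max_const (h := fun v => - h v) eig_opp le_k_l hmin min_lt0.
  by move=> /= hmin_const; apply: oppr_inj; rewrite !hmin_const.
by have := hmax x; have := hmax y; have := hmin x; have := hmin y; lra.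
Qed.

Lemma adjform_le_sum0 (t : R) f :
  (forall l, eigenvalue (adjmx e R) l -> t < l -> k%:R <= l) ->
  \sum_v f v = 0 -> adjform e f f <= t * sqnorm f.
Proof.
move=> gap_t sum0; rewrite -dotr_rowfunE -dotr_rowfun_adjmx //.
apply: symmx_rayleigh_le; first exact: adjmx_sym.
move=> l Z ZA t_lt_l; have [->|Zn0] := eqVneq Z 0.
  by rewrite /dotr trmx0 mulmx0 mxE.
have le_k_l : k%:R <= l by apply: gap_t t_lt_l; apply/eigenvalueP; exists Z.
have eig_Z x : \sum_y (e x y)%:R * Z 0 (enum_rank y) = l * Z 0 (enum_rank x).
  have /rowP/(_ (enum_rank x)) := ZA; rewrite !mxE => <-.
  rewrite -sum_enum_val; apply: eq_bigr => i _.
  by rewrite !mxE enum_valK enum_rankK sym_e mulrC.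
case: (pickP (@predT T)) => [x0 _|T0]; last by rewrite dotr_rowfun big_pred0.
rewrite dotr_rowfun (eq_bigr (fun x => f x * Z 0 (enum_rank x0))); last first.
  by move=> x _; rewrite (eigenfun_const eig_Z le_k_l x x0).
by rewrite -mulr_suml sum0 mul0r.
Qed.


Section OrderedSpectrum.
Variables (theta : nat -> R) (D : nat).
Hypothesis theta_decr : forall i j, (i < j <= D)%N -> theta j < theta i.
Hypothesis theta_spec :
  forall l, eigenvalue (adjmx e R) l -> exists2 i, (i <= D)%N & l = theta i.

Lemma theta_le i j : (i <= j <= D)%N -> theta j <= theta i.
Proof.
case/andP; rewrite leq_eqVlt => /orP[/eqP -> //|lt_ij le_jD].
by apply/ltW/theta_decr; rewrite lt_ij.
Qed.

Lemma adjform_ge_theta_last f : theta D * sqnorm f <= adjform e f f.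
Proof.
apply: (adjform_ge_eig_lb sym_e) => l /theta_spec [i le_iD ->].
by apply: theta_le; rewrite le_iD leqnn.
Qed.

Lemma adjform_le_theta1 f : T -> \sum_v f v = 0 -> adjform e f f <= theta 1 * sqnorm f.
Proof.
move=> x; apply: adjform_le_sum0 => l /theta_spec [[|i] le_iD ->] lt_1i.
  have [j le_jD ->] := theta_spec (adjmx_eigenvalue_deg x).
  by apply: theta_le; rewrite le_jD.
by move: lt_1i; rewrite ltNge theta_le.
Qed.

End OrderedSpectrum.

End RegularGraph.

Section DistanceRegular.
Variables (R : rcfType) (T : finType) (e : rel T) (b c : nat -> nat).
Hypothesis sym_e : symmetric e.
Hypothesis irr_e : irreflexive e.
Hypothesis conn_e : forall x y : T, connect e x y.
Hypothesis drg_e : distance_regular e b c.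

Local Notation k := (b 0)%:R.
Local Notation a1 := (inter_a b c 1)%:R.

Lemma card_sum_pred (P : pred T) : #|[set z | P z]| = (\sum_z P z)%N.
Proof.
rewrite -sum1_card [LHS]big_mkcond; apply: eq_bigr => z _.
by rewrite inE; case: (P z).
Qed.

Lemma drg_regular x : #|[set y | e x y]| = b 0.
Proof.
have [_ bE] := drg_e x x; rewrite (gdist_xx conn_e) in bE; rewrite -bE.
by apply: eq_card => z; rewrite !inE (gdist_eq1 irr_e conn_e) // andbb.
Qed.

Lemma card_nbrs_same_layer x y i : gdist e x y = i -> (0 < i)%N ->
  #|[set z | e y z && (gdist e x z == i)]| = inter_a b c i.
Proof.
move=> dxy i_gt0; have [cE bE] := drg_e x y; rewrite dxy in cE bE.
have := drg_regular y; rewrite /inter_a !card_sum_pred in cE bE * => degE.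
have layers : (\sum_z e y z = \sum_z (e y z && ((gdist e x z).+1 == i))
   + \sum_z (e y z && (gdist e x z == i)) + \sum_z (e y z && (gdist e x z == i.+1)))%N.
  rewrite -!big_split /=; apply: eq_bigr => z _.
  case eyz: (e y z) => //=.
  have up := gdist_edge conn_e x eyz; have down := gdist_edge_sym sym_e conn_e x eyz.
  rewrite dxy in up down; by do 3 case: eqP => ? //=; lia.
by rewrite degE cE bE in layers; lia.
Qed.

Lemma common_nbrs_adj x u : e x u -> \sum_v (e u v)%:R * (e x v)%:R = a1 :> R.
Proof.
move=> exu; have d1 : gdist e x u = 1 by apply/eqP; rewrite (gdist_eq1 irr_e conn_e).
rewrite -(card_nbrs_same_layer d1) // card_sum_pred natr_sum.
apply: eq_bigr => v _; rewrite (gdist_eq1 irr_e conn_e).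
by case: (e u v); case: (e x v); rewrite ?mulr1 ?mulr0.
Qed.

Definition star x (s : R) v := s * (v == x)%:R + (e x v)%:R.

Lemma sum_star x s : \sum_v star x s v = s + k.
Proof.
rewrite big_split /= -mulr_sumr (sum_adj R drg_regular) (bigD1 x) //= eqxx.
by rewrite big1 ?addr0 ?mulr1 // => v /negbTE ->.
Qed.

Lemma sqnorm_star x s : sqnorm (star x s) = s ^+ 2 + k.
Proof.
rewrite /sqnorm /star (bigD1 x) //= eqxx irr_e mulr1 addr0; congr (_ + _).
rewrite -(sum_adj R drg_regular x) [RHS](bigD1 x) //= irr_e add0r.
apply: eq_bigr => v /negbTE ->.
by rewrite mulr0 add0r; case: (e x v); rewrite ?expr1n ?expr0n.
Qed.

Lemma adj_star x s u : \sum_v (e u v)%:R * star x s v =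
  s * (e u x)%:R + \sum_v (e u v)%:R * (e x v)%:R.
Proof.
rewrite /star; under eq_bigr => v _ do rewrite mulrDr mulrCA.
rewrite big_split /= -mulr_sumr; congr (_ * _ + _).
by rewrite (bigD1 x) //= eqxx mulr1 big1 ?addr0 // => v /negbTE ->; rewrite mulr0.
Qed.

Lemma adjform_star x s : adjform e (star x s) (star x s) = 2 * s * k + k * a1.
Proof.
rewrite adjform_rowE; under eq_bigr => u _ do rewrite adj_star.
rewrite {1}/star; under eq_bigr => u _ do rewrite mulrDl.
rewrite big_split /= (bigD1 x) //= eqxx irr_e mulr0 add0r mulr1.
rewrite [X in _ + X + _]big1 ?addr0; last by move=> u /negbTE ->; rewrite mulr0 mul0r.
have -> : \sum_v (e x v)%:R * (e x v)%:R = k :> R.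
  rewrite -(sum_adj R drg_regular x); apply: eq_bigr => v _.
  by case: (e x v); rewrite ?mulr1 ?mulr0.
have -> : \sum_u (e x u)%:R * (s * (e u x)%:R + \sum_v (e u v)%:R * (e x v)%:R)
    = \sum_u (e x u)%:R * (s + a1).
  apply: eq_bigr => u _; case exu: (e x u); last by rewrite !mul0r.
  by rewrite sym_e exu common_nbrs_adj // mulr1.
by rewrite -mulr_suml (sum_adj R drg_regular); ring.
Qed.

Lemma adjform_star_root x (r : R) : r != 0 -> r ^+ 2 = a1 * r + k ->
  adjform e (star x (k / r)) (star x (k / r)) = r * sqnorm (star x (k / r)).
Proof.
move=> r_neq0 root_r; rewrite adjform_star sqnorm_star.
have -> : k = r ^+ 2 - a1 * r by rewrite root_r; ring.
by field.
Qed.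

Lemma star_support x s u : star x s u != 0 -> (gdist e x u <= 1)%N.
Proof.
rewrite /star; have [->|_] := eqVneq u x; first by rewrite (gdist_xx conn_e).
case exu: (e x u); last by rewrite mulr0 add0r eqxx.
by move: exu; rewrite -(gdist_eq1 irr_e conn_e) => /eqP ->.
Qed.

Lemma star_separated x s (g : T -> R) :
  (forall v, g v != 0 -> (2 < gdist e x v)%N) ->
  (forall u v, e u v -> star x s u * g v = 0) /\ (forall v, star x s v * g v = 0).
Proof.
move=> g_far; split => [u v euv|v].
  have [->|/star_support xu] := eqVneq (star x s u) 0; first by rewrite mul0r.
  have [->|/g_far xv] := eqVneq (g v) 0; first by rewrite mulr0.
  by have := gdist_edge conn_e x euv; lia.
have [->|/star_support xv] := eqVneq (star x s v) 0; first by rewrite mul0r.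
have [->|/g_far xv'] := eqVneq (g v) 0; first by rewrite mulr0.
lia.
Qed.

Lemma star_sum_sqnorm_gt0 x (r : R) : (0 < b 0)%N -> 0 < r ->
  0 < \sum_v star x (k / r) v /\ 0 < sqnorm (star x (k / r)).
Proof.
move=> b0_gt0 r_gt0; have k_gt0 : 0 < k :> R by rewrite ltr0n.
have s_gt0 : 0 < k / r by rewrite divr_gt0.
by rewrite sum_star sqnorm_star; split; [lra | have := sqr_ge0 (k / r); lra].
Qed.

Lemma common_nbrs_dist2_gt0 x z : gdist e x z = 2 ->
  0 < \sum_v (e z v)%:R * (e x v)%:R :> R.
Proof.
move=> dxz; have [w ewz dxw] := gdist_pred conn_e dxz.
have exw : e x w by rewrite -(gdist_eq1 irr_e conn_e) dxw.
rewrite (bigD1 w) //= sym_e ewz exw mulr1; apply: ltr_wpDr; last exact: ltr01.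
by apply: sumr_ge0 => v _; rewrite mulr_ge0 ?ler0n.
Qed.

Lemma rayleigh_lb_lt_neg_root (t r : R) x z :
  (forall f, t * sqnorm f <= adjform e f f) ->
  gdist e x z = 2 -> r < 0 -> r ^+ 2 = a1 * r + k -> t < r.
Proof.
move=> rayleigh dxz r_lt0 root_r; have r_neq0 : r != 0 by rewrite lt_eqF.
have zx : (z == x) = false by apply: contra_eqF dxz => /eqP ->; rewrite (gdist_xx conn_e).
have exz : e x z = false.
  by apply: contra_eqF dxz; rewrite -(gdist_eq1 irr_e conn_e) => /eqP ->.
pose m : R := \sum_v (e z v)%:R * (e x v)%:R.
have m_gt0 : 0 < m := common_nbrs_dist2_gt0 dxz.
pose s := k / r; pose eps := m / r.
pose h v := star x s v + eps * (v == z)%:R.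
have adjform_h : adjform e h h = 2 * s * k + k * a1 + eps * (m + m).
  rewrite adjform_addZ adjform_star (adjformC sym_e (star x s)) !adjform_delta.
  by rewrite adj_star sym_e exz mulr0 add0r sum_mul_delta irr_e mulr0 addr0.
have sqnorm_h : sqnorm h = s ^+ 2 + k + eps ^+ 2.
  rewrite sqnorm_addZ sqnorm_star sqnorm_delta mulr1 sum_mul_delta.
  by rewrite /star zx exz mulr0 add0r mulr0 addr0.
have sqnorm_h_gt0 : 0 < sqnorm h.
  have eps2_gt0 : 0 < eps ^+ 2.
    by rewrite exprn_even_gt0 //= mulf_neq0 ?invr_eq0 // gt_eqF.
  by rewrite sqnorm_h; have := sqr_ge0 s; have := ler0n R (b 0); lra.
have defect : adjform e h h - r * sqnorm h = m ^+ 2 / r.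
  rewrite adjform_h sqnorm_h /s /eps.
  have -> : k = r ^+ 2 - a1 * r by rewrite root_r; ring.
  by field.
have defect_lt0 : m ^+ 2 / r < 0 by rewrite pmulr_rlt0 ?invr_lt0 // exprn_gt0.
have := rayleigh h; rewrite -(ltr_pM2r sqnorm_h_gt0) => ?; lra.
Qed.

Lemma pos_root_le_rayleigh_ub (t r : R) x y :
  (forall h, \sum_v h v = 0 -> adjform e h h <= t * sqnorm h) ->
  (0 < b 0)%N -> (3 < gdist e x y)%N -> 0 < r -> r ^+ 2 = a1 * r + k -> r <= t.
Proof.
move=> rayleigh b0_gt0 dxy r_gt0 root_r; have r_neq0 : r != 0 by rewrite gt_eqF.
have [sum_x_gt0 sqnorm_x_gt0] := star_sum_sqnorm_gt0 x b0_gt0 r_gt0.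
have [sum_y_gt0 _] := star_sum_sqnorm_gt0 y b0_gt0 r_gt0.
have far_y v : star y (k / r) v != 0 -> (2 < gdist e x v)%N.
  move=> /star_support yv; have := gdist_le1_triangle sym_e irr_e conn_e x yv; lia.
have [sep disj] := star_separated (k / r) far_y.
by apply: (rayleigh_separated_le sym_e rayleigh sep disj) => //;
  rewrite adjform_star_root.
Qed.

Definition layer x i v : R := (gdist e x v == i)%:R.

Lemma adjform_layer x i : (0 < i)%N ->
  adjform e (layer x i) (layer x i) = (inter_a b c i)%:R * sqnorm (layer x i).
Proof.
move=> i_gt0; rewrite adjform_rowE /layer /sqnorm mulr_sumr; apply: eq_bigr => u _.
case: (eqVneq (gdist e x u) i) => [dxu|_]; last by rewrite !mul0r expr0n mulr0.
rewrite mul1r expr1n mulr1 -(card_nbrs_same_layer dxu) // card_sum_pred natr_sum.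
by apply: eq_bigr => v _; case: (e u v); case: (_ == _); rewrite ?mulr1 ?mulr0.
Qed.

Lemma min_pos_root_a3_le_rayleigh_ub (t r : R) x z :
  (forall h, \sum_v h v = 0 -> adjform e h h <= t * sqnorm h) ->
  (0 < b 0)%N -> gdist e x z = 3 -> 0 < r -> r ^+ 2 = a1 * r + k ->
  Num.min r (inter_a b c 3)%:R <= t.
Proof.
move=> rayleigh b0_gt0 dxz r_gt0 root_r; have r_neq0 : r != 0 by rewrite gt_eqF.
have [sum_x_gt0 sqnorm_x_gt0] := star_sum_sqnorm_gt0 x b0_gt0 r_gt0.
have sum_layer_gt0 : 0 < \sum_v layer x 3 v.
  rewrite (bigD1 z) //= /layer dxz eqxx; apply: ltr_wpDr; last exact: ltr01.
  by apply: sumr_ge0 => v _; rewrite ler0n.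
have far_layer v : layer x 3 v != 0 -> (2 < gdist e x v)%N.
  by rewrite /layer pnatr_eq0 eqb0 negbK => /eqP ->.
have [sep disj] := star_separated (k / r) far_layer.
apply: (rayleigh_separated_le sym_e rayleigh sep disj) => //.
  by rewrite adjform_star_root // ler_wpM2r ?ge_min ?lexx // ltW.
by rewrite adjform_layer // ler_wpM2r ?ge_min ?lexx ?orbT ?sqnorm_ge0.
Qed.

End DistanceRegular.

Theorem theorem3p1 (R : rcfType) (T : finType) (e : rel T)
    (b c : nat -> nat) (theta : nat -> R) :
  simple_connected_graph e ->
  distance_regular e b c ->
  (3 <= b 0%N)%N ->
  (3 <= diameter e)%N ->
  (forall i, (i <= diameter e)%N -> eigenvalue (@adjmx _ e R) (theta i)) ->
  (forall i j, (i < j <= diameter e)%N -> theta j < theta i) ->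
  (forall t : R, eigenvalue (@adjmx _ e R) t ->
     exists2 i, (i <= diameter e)%N & t = theta i) ->
  let k : R := (b 0%N)%:R in
  let a1 : R := (inter_a b c 1%N)%:R in
  let a3 : R := (inter_a b c 3%N)%:R in
  [/\ theta (diameter e) < (a1 - Num.sqrt (a1 ^+ 2 + 4 * k)) / 2,
      theta 1%N >= Num.min ((a1 + Num.sqrt (a1 ^+ 2 + 4 * k)) / 2) a3
    & ((4 <= diameter e)%N -> theta 1%N >= (a1 + Num.sqrt (a1 ^+ 2 + 4 * k)) / 2)].
Proof.
move=> [sym_e [irr_e conn_e]] drg_e b0_ge3 D_ge3 _ theta_decr theta_spec k a1 a3.
have b0_gt0 : (0 < b 0)%N by lia.
have k_gt0 : 0 < k by rewrite ltr0n.
have [root_m root_m_lt0 root_p root_p_gt0] := quadratic_roots a1 k_gt0.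
have [x [y dxy]] : exists x y, gdist e x y = diameter e.
  by apply: diameter_attained; lia.
have [z2 dxz2] : exists z, gdist e x z = 2.
  by apply: (gdist_intermediate conn_e (y := y)); rewrite dxy; lia.
have [z3 dxz3] : exists z, gdist e x z = 3.
  by apply: (gdist_intermediate conn_e (y := y)); rewrite dxy.
have rayleigh1 (h : T -> R) : \sum_v h v = 0 -> adjform e h h <= theta 1 * sqnorm h.
  exact: (adjform_le_theta1 sym_e conn_e (drg_regular irr_e conn_e drg_e) theta_decr
    theta_spec x).
split.
- apply: (rayleigh_lb_lt_neg_root sym_e irr_e conn_e drg_e _ dxz2 root_m_lt0 root_m).
  exact: (adjform_ge_theta_last sym_e theta_decr theta_spec).
- exact: (min_pos_root_a3_le_rayleigh_ub sym_e irr_e conn_e drg_e rayleigh1 b0_gt0 dxz3).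
- move=> D_ge4; apply: (pos_root_le_rayleigh_ub sym_e irr_e conn_e drg_e (x := x) (y := y)
    rayleigh1 b0_gt0 _ root_p_gt0 root_p).
  by rewrite dxy.
Qed.
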